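(* Let $X$ be a proper geodesic metric space with a free, proper, cocompact, isometric action of a finitely generated group $\Gamma$ (with fixed finite symmetric generating set $S$), and let $P$ be a space with a proper $\Gamma$-action. If $p:P\to\mathbb{R}^N$ is a proper map satisfying the Displacement Bound Condition $\|p(z)-p(\gamma z)\|\le\|\gamma\|_S$ for all $z\in P$, $\gamma\in\Gamma$, then there exists a continuous map $\alpha:X\times P\to\mathbb{R}^N$ satisfying: (L1) $\alpha$ is invariant under the diagonal $\Gamma$-action on $X\times P$; (L2) $\alpha|_{\{x\}\times P}$ is proper for every $x\in X$; (L3) $\alpha|_{X\times\{z\}}$ is 1-Lipschitz for every $z\in P$.
   Context: $\|\gamma\|_S$ denotes the word length of $\gamma$ with respect to $S$. *)

From HB Require Import structures.
From mathcomp Require Import all_boot all_order all_algebra.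
From mathcomp Require Import all_classical all_reals all_analysis.
From mathcomp Require monoid.

Set Implicit Arguments. Unset Strict Implicit. Unset Printing Implicit Defensive.
Import Order.TTheory GRing.Theory Num.Theory numFieldNormedType.Exports.
Local Open Scope classical_set_scope.
Local Open Scope ring_scope.

Section Defs.

Variable G : monoid.Group.type.

Local Notation gmul := (@monoid.mul G).
Local Notation gone := (@monoid.one G).
Local Notation ginv := (@monoid.inv G).

Definition word_prod (w : seq G) : G := foldr gmul gone w.

Definition is_word (S : set G) (g : G) (w : seq G) : Prop :=
  (forall i, (i < size w)%N -> S (nth gone w i)) /\ word_prod w = g.

Definition finite_symmetric_generating (S : set G) : Prop :=
  [/\ finite_set S, (forall s, S s -> S (ginv s)) & forall g, exists w, is_word S g w].

(* word length ||g||_S : the least length of a word in S representing g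
   (0 by convention if no such word exists, which never happens for a generating set) *)
Definition word_length (S : set G) (g : G) : nat :=
  match pselect (exists n, `[< exists w, is_word S g w /\ size w = n >]) with
  | left h => ex_minn h
  | right _ => 0%N
  end.

Definition is_action (T : Type) (act : G -> T -> T) : Prop :=
  (forall x, act gone x = x) /\ (forall g h x, act (gmul g h) x = act g (act h x)).

Definition proper_action (T : topologicalType) (act : G -> T -> T) : Prop :=
  forall K : set T, compact K -> finite_set [set g | (act g @` K) `&` K !=set0].

Definition cocompact_action (T : topologicalType) (act : G -> T -> T) : Prop :=
  exists K : set T, compact K /\ forall x, exists g, (act g @` K) x.

Definition free_action (T : Type) (act : G -> T -> T) : Prop :=
  forall g x, act g x = x -> g = gone.

End Defs.

Definition proper_map (T U : topologicalType) (f : T -> U) : Prop :=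
  continuous f /\ forall K : set U, compact K -> compact (f @^-1` K).

Section MetricDefs.
Variable R : realType.

Definition enorm (N : nat) (v : 'rV[R]_N) : R :=
  Num.sqrt (\sum_(i < N) v ord0 i ^+ 2).

Variable X : metricType R.

Definition proper_metric_space : Prop :=
  forall (x : X) (r : R), compact [set y | mdist x y <= r].

Definition geodesic_space : Prop :=
  forall x y : X, exists c : R -> X,
    [/\ c 0 = x, c (mdist x y) = y &
        forall s t, 0 <= s <= mdist x y -> 0 <= t <= mdist x y ->
          mdist (c s) (c t) = `|s - t|].

Definition isometric_action (G : monoid.Group.type) (act : G -> X -> X) : Prop :=
  forall g x y, mdist (act g x) (act g y) = mdist x y.

End MetricDefs.

From HB Require Import structures.
From mathcomp Require Import all_boot all_order all_algebra.
From mathcomp Require Import all_classical all_reals all_analysis.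
From mathcomp Require monoid.
From mathcomp Require Import ring lra.

Set Implicit Arguments.
Unset Strict Implicit.
Unset Printing Implicit Defensive.
Import Order.TTheory GRing.Theory Num.Theory numFieldNormedType.Exports.
Local Open Scope classical_set_scope.
Local Open Scope ring_scope.

(* A Svarc-Milnor argument along geodesics bounds the word length linearly by
   the orbit displacement: |g|_S <= L d(x0, g x0) + L.  Each coordinate of
   alpha is then the inf-convolution
     alpha_i(x, z) = c * inf_g (p_i(g^-1 z) + 2L d(x, g x0)),
   which is invariant by reindexing g and 2L-Lipschitz in x as an infimum of
   2L-Lipschitz functions.  The displacement bound and the Svarc-Milnor
   estimate keep the infimum within 2L d(x, x0) + L of p_i(z), so slices are
   proper because p is; properness of the action on X leaves only finitely
   many g competing for the infimum near x, which gives continuity.  The scale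
   c = 1 / ((N + 1) 2L) turns the coordinatewise bound into 1-Lipschitz. *)

Section WordLength.
Variables (G : monoid.Group.type) (S : set G).
Local Notation gmul := (@monoid.mul G).
Local Notation gone := (@monoid.one G).

Lemma word_prod_cat (w1 w2 : seq G) :
  word_prod (w1 ++ w2) = gmul (word_prod w1) (word_prod w2).
Proof.
elim: w1 => [|a w IH] /=; first by rewrite monoid.mul1g.
by rewrite /word_prod /= -/(word_prod _) IH monoid.mulgA.
Qed.

Lemma word_length_le_size g w : is_word S g w -> (word_length S g <= size w)%N.
Proof.
rewrite /word_length; case: pselect => [h|//] Hw.
by case: (ex_minnP h) => n _; apply; apply/asboolP; exists w.
Qed.

Lemma word_lengthP g : finite_symmetric_generating S ->
  exists2 w, is_word S g w & size w = word_length S g.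
Proof.
move=> [_ _ genS]; rewrite /word_length; case: pselect => [h|nh].
  by case: (ex_minnP h) => n /asboolP [w [Hw <-]] _; exists w.
by exfalso; have [w Hw] := genS g; apply: nh; exists (size w); apply/asboolP; exists w.
Qed.

Lemma word_length_mul g h : finite_symmetric_generating S ->
  (word_length S (gmul g h) <= word_length S g + word_length S h)%N.
Proof.
move=> genS.
have [w1 [S1 P1] <-] := word_lengthP g genS.
have [w2 [S2 P2] <-] := word_lengthP h genS.
rewrite -size_cat; apply: word_length_le_size; split; last by rewrite word_prod_cat P1 P2.
move=> i; rewrite size_cat nth_cat => Hi; case: ltnP => Hi1; first exact: S1.
by apply: S2; rewrite ltn_subLR.
Qed.

End WordLength.

Lemma finite_set_bounded_nat (T : eqType) (f : T -> nat) (A : set T) :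
  finite_set A -> exists M, forall x, A x -> (f x <= M)%N.
Proof.
move=> /finite_seqP [s ->]; exists (\max_(x <- s) f x) => x sx.
exact: leq_bigmax_seq.
Qed.

Section MetricFacts.
Variables (R : realType) (X : metricType R).

Lemma mdist_lipschitz (a y t : X) : `|mdist a y - mdist a t| <= mdist y t.
Proof.
have := metric_triangle a y t; have := metric_triangle a t y.
rewrite (metric_sym t y) ler_norml => ? ?; apply/andP; split; lra.
Qed.

Lemma continuous_mdist (a : X) : continuous (fun y : X => (mdist a y : R^o)).
Proof.
move=> y; apply/cvgrPdist_lt => e e0.
apply/metricType_numDomainType.nbhs_mdistP; exists e => //= t.
exact: le_lt_trans (mdist_lipschitz a y t).
Qed.

Lemma compact_mdist_bounded (K : set X) (a : X) : compact K ->
  exists2 r : R, 0 <= r & forall k, K k -> mdist a k <= r.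
Proof.
move=> cK; have cI : compact ((fun y : X => (mdist a y : R^o)) @` K).
  by apply: continuous_compact => //; apply: continuous_subspaceT; exact: continuous_mdist.
have [M [_ HM]] := compact_bounded cI.
exists (`|M| + 1) => [|k Kk]; first by rewrite addr_ge0.
have /= := HM (`|M| + 1) _ (mdist a k) (ex_intro2 _ _ k Kk erefl).
rewrite (ger0_norm (mdist_ge0 a k)); apply.
by have := real_ler_norm (num_real M); lra.
Qed.

Lemma geodesic_split (x y : X) (t : R) : geodesic_space X -> 0 <= t <= mdist x y ->
  exists z, mdist x z = t /\ mdist z y = mdist x y - t.
Proof.
move=> /(_ x y) [c [c0 cD cc]] /andP [t0 tD]; exists (c t).
have d0 := mdist_ge0 x y.
have in0 : (0 : R) <= 0 <= mdist x y by rewrite lexx.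
have int : 0 <= t <= mdist x y by rewrite t0.
have inD : 0 <= mdist x y <= mdist x y by rewrite d0 lexx.
split; first by rewrite -{1}c0 (cc _ _ in0 int) sub0r normrN ger0_norm.
by rewrite -{1}cD (cc _ _ int inD) ler0_norm ?opprB // subr_le0.
Qed.

End MetricFacts.

Section SvarcMilnor.
Variables (R : realType) (G : monoid.Group.type) (S : set G) (X : metricType R)
  (actX : G -> X -> X).
Local Notation gmul := (@monoid.mul G).
Local Notation ginv := (@monoid.inv G).
Hypotheses (genS : finite_symmetric_generating S) (properX : proper_metric_space X)
  (geoX : geodesic_space X) (actionX : is_action actX)
  (properA : proper_action actX) (isoA : isometric_action actX).

Lemma act_invK h y : actX h (actX (ginv h) y) = y.
Proof. by rewrite -(proj2 actionX) monoid.mulgV (proj1 actionX). Qed.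

Lemma mdist_act_inv h (a b : X) : mdist a (actX (ginv h) b) = mdist (actX h a) b.
Proof. by rewrite -(isoA h) act_invK. Qed.

Lemma cocompact_cover_radius (x0 : X) : cocompact_action actX ->
  exists2 r : R, 0 <= r & forall x, exists h, mdist x (actX h x0) <= r.
Proof.
move=> [K [cK cov]]; have [r r0 Kr] := compact_mdist_bounded x0 cK.
exists r => // x; have [h [k Kk <-]] := cov x; exists h.
by rewrite isoA metric_sym; apply: Kr.
Qed.

Lemma finite_orbit_ball (x0 x : X) (rho : R) :
  finite_set [set g | mdist x (actX g x0) <= rho].
Proof.
pose B := [set y | mdist x y <= `|rho| + mdist x x0].
apply: (@sub_finite_set _ _ [set g | (actX g @` B) `&` B !=set0]); last exact/properA/properX.
move=> g /= hg; have := mdist_ge0 x x0; have := ler_norm rho; have := normr_ge0 rho => ? ? ?.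
exists (actX g x0); split; last by rewrite /B /=; lra.
by exists x0 => //; rewrite /B /=; lra.
Qed.

Section Induction.
Variables (x0 : X) (r : R) (M : nat).
Hypotheses (r0 : 0 <= r) (cover : forall x, exists h, mdist x (actX h x0) <= r)
  (smallM : forall f, mdist x0 (actX f x0) <= 3 * r + 1 -> (word_length S f <= M)%N).

(* Cut the geodesic from [x0] to [g x0] at distance [2r+1] before its end and
   move to a nearby orbit point [h x0]: [h] is closer to [x0] by at least 1,
   and [h^-1 g] moves [x0] by at most [3r+1]. *)
Lemma word_length_orbit_step (k : nat) g :
  mdist x0 (actX g x0) <= k%:R -> (word_length S g <= k.+1 * M)%N.
Proof.
elim: k g => [|k IH] g Hg.
  rewrite mul1n; apply: smallM; apply: le_trans Hg _; move: r0; lra.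
have [Hs|Hb] := lerP (mdist x0 (actX g x0)) (3 * r + 1).
  by apply: leq_trans (smallM Hs) _; rewrite leq_pmull.
have [|y [dxy dyg]] :=
  geodesic_split (x := x0) (y := actX g x0) (t := mdist x0 (actX g x0) - (2 * r + 1)) geoX.
  by apply/andP; split; move: r0; lra.
have [h Hh] := cover y.
have Ih : (word_length S h <= k.+1 * M)%N.
  apply: IH; have := metric_triangle x0 y (actX h x0); rewrite -natr1 in Hg; move: r0; lra.
have Hf : (word_length S (gmul (ginv h) g) <= M)%N.
  apply: smallM; rewrite (proj2 actionX) mdist_act_inv.
  by have := metric_triangle (actX h x0) y (actX g x0); rewrite metric_sym in Hh; move: r0; lra.
rewrite -(monoid.mulVKg h g); apply: leq_trans (word_length_mul _ _ genS) _.
by rewrite mulSn addnC leq_add.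
Qed.

End Induction.

Lemma svarc_milnor_bound (x0 : X) : cocompact_action actX ->
  exists2 L : R, 0 < L & forall g, (word_length S g)%:R <= L * mdist x0 (actX g x0) + L.
Proof.
move=> cocpt; have [r r0 cover] := cocompact_cover_radius x0 cocpt.
have [M smallM] := finite_set_bounded_nat (word_length S) (finite_orbit_ball x0 x0 (3 * r + 1)).
exists (2 * M%:R + 1) => [|g]; first by have := ler0n R M; lra.
have D0 := mdist_ge0 x0 (actX g x0); set D := mdist x0 (actX g x0) in D0 *.
have kD : (Num.truncn D)%:R <= D by rewrite truncn_le.
have := word_length_orbit_step r0 cover smallM (ltW (truncnS_gt D)).
rewrite -(ler_nat R) natrM -!natr1 => /le_trans; apply.
by have := ler0n R M; nra.
Qed.

End SvarcMilnor.

Section EuclideanNorm.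
Variables (R : realType) (N : nat).

Lemma coord_le_enorm (v : 'rV[R]_N) i : `|v ord0 i| <= enorm v.
Proof.
rewrite /enorm -sqrtr_sqr; apply: ler_wsqrtr.
by rewrite (bigD1 i) //= lerDl; apply: sumr_ge0 => j _; exact: sqr_ge0.
Qed.

Lemma enorm_le_coord_bound (v : 'rV[R]_N) B : 0 <= B ->
  (forall i, `|v ord0 i| <= B) -> enorm v <= (N%:R + 1) * B.
Proof.
move=> B0 vB; have N0 := ler0n R N.
rewrite /enorm -[leRHS]ger0_norm; last by apply: mulr_ge0 => //; lra.
rewrite -sqrtr_sqr; apply: ler_wsqrtr.
apply: (@le_trans _ _ (\sum_(i < N) B ^+ 2)).
  by apply: ler_sum => i _; have := vB i; rewrite ler_norml => /andP[? ?]; nra.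
by rewrite sumr_const card_ord -mulr_natr; nra.
Qed.

Lemma compact_rV_coord_bounded (A : set 'rV[R]_N) : compact A ->
  exists B, forall v, A v -> forall i, `|v ord0 i| <= B.
Proof.
move=> /compact_bounded [M [_ HM]]; exists (`|M| + 1) => v Av i.
have := real_ler_norm (num_real M) => ?.
apply: le_trans (HM _ _ v Av); last by lra.
rewrite [leRHS]/Num.norm /= mx_normrE.
exact: (le_bigmax 0 (fun ij : 'I_1 * 'I_N => `|v ij.1 ij.2|) (ord0, i)).
Qed.

End EuclideanNorm.

Lemma continuous_row (R : realType) (T : topologicalType) n (f : 'I_n -> T -> R) :
  (forall i, continuous (f i)) -> continuous (fun t => \row_i f i t : 'rV[R]_n).
Proof.
move=> fc t A [Pf hP sPA].
apply: (filterS _ (@filter_forall _ ('I_1 * 'I_n)%type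
  (fun ij s => Pf ij.1 ij.2 ((\row_i f i s) ij.1 ij.2)) _ _ _)).
  by move=> s hs; apply: sPA => i j; exact: (hs (i, j)).
move=> [i j]; have := hP i j; rewrite mxE => /(fc j t) h3.
by near=> s; rewrite /= mxE; near: s.
Unshelve. all: by end_near. Qed.

Section SeqMin.
Variables (T : eqType) (R : realType).

Definition seq_min (f : T -> R) (b : R) (s : seq T) :=
  foldr (fun x m => Num.min (f x) m) b s.

Lemma seq_min_le_default f b s : seq_min f b s <= b.
Proof. by elim: s => //= a s IH; rewrite ge_min IH orbT. Qed.

Lemma seq_min_le f b s x : x \in s -> seq_min f b s <= f x.
Proof.
elim: s => //= a s IH; rewrite in_cons => /orP [/eqP ->|xs].
  by rewrite ge_min lexx.
by rewrite ge_min IH ?orbT.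
Qed.

Lemma le_seq_min f b s m : m <= b -> (forall x, x \in s -> m <= f x) ->
  m <= seq_min f b s.
Proof.
move=> mb ms; elim: s ms => //= a s IH ms.
by rewrite le_min ms ?mem_head ?IH // => x xs; rewrite ms // in_cons xs orbT.
Qed.

Lemma continuous_seq_min (P : topologicalType) (f : T -> P -> R) (b : P -> R) s :
  continuous b -> (forall x, continuous (f x)) ->
  continuous (fun z => seq_min (f^~ z) (b z) s).
Proof.
move=> bc fc; elim: s => [|a s IH] //= z.
exact: (continuous_min (fc a z) (IH z)).
Qed.

End SeqMin.

Section InfConvolution.
Variables (R : realType) (G : monoid.Group.type) (S : set G)
  (X : metricType R) (actX : G -> X -> X)
  (P : topologicalType) (actP : G -> P -> P)
  (N : nat) (p : P -> 'rV[R]_N).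
Local Notation gmul := (@monoid.mul G).
Local Notation gone := (@monoid.one G).
Local Notation ginv := (@monoid.inv G).
Hypotheses (actionX : is_action actX) (isoA : isometric_action actX)
  (properA : proper_action actX) (properX : proper_metric_space X)
  (actionP : is_action actP) (contP : forall g, continuous (actP g))
  (properp : proper_map p)
  (displacement : forall z g, enorm (p z - p (actP g z)) <= (word_length S g)%:R).
Variables (x0 : X) (L : R).
Hypotheses (L0 : 0 < L)
  (svarc_milnor : forall g, (word_length S g)%:R <= L * mdist x0 (actX g x0) + L).

Definition shift_coord i g x z :=
  p (actP (ginv g) z) ord0 i + 2 * L * mdist x (actX g x0).

Definition inf_coord i x z := inf (range (fun g => shift_coord i g x z)).

Lemma coord_displacement_le i z g :
  `|p z ord0 i - p (actP g z) ord0 i| <= L * mdist x0 (actX g x0) + L.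
Proof.
have := coord_le_enorm (p z - p (actP g z)) i; rewrite !mxE => /le_trans; apply.
exact: le_trans (displacement z g) (svarc_milnor g).
Qed.

Lemma shift_coord_lb i g x z :
  p z ord0 i - L * mdist x x0 - L + L * mdist x (actX g x0) <= shift_coord i g x z.
Proof.
have := coord_displacement_le i z (ginv g); rewrite mdist_act_inv // ler_norml.
move=> /andP [_ disp]; have := metric_triangle (actX g x0) x x0.
rewrite (metric_sym _ x) => tri.
have : L * mdist (actX g x0) x0 <= L * (mdist x (actX g x0) + mdist x x0).
  by rewrite ler_wpM2l // ltW.
rewrite /shift_coord; lra.
Qed.

Lemma shift_coord1 i x z : shift_coord i gone x z = p z ord0 i + 2 * L * mdist x x0.
Proof. by rewrite /shift_coord monoid.invg1 (proj1 actionP) (proj1 actionX). Qed.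

Lemma shift_coord_lb_uniform i x z g :
  p z ord0 i - L * mdist x x0 - L <= shift_coord i g x z.
Proof.
have := shift_coord_lb i g x z; have := mdist_ge0 x (actX g x0).
by have := ltW L0; nra.
Qed.

Lemma inf_coord_le i g x z : inf_coord i x z <= shift_coord i g x z.
Proof.
apply: ge_inf; last by exists g.
by exists (p z ord0 i - L * mdist x x0 - L) => _ [h _ <-]; exact: shift_coord_lb_uniform.
Qed.

Lemma le_inf_coord i x z m : (forall g, m <= shift_coord i g x z) -> m <= inf_coord i x z.
Proof.
move=> mle; apply: lb_le_inf; first by exists (shift_coord i gone x z), gone.
by move=> _ [g _ <-].
Qed.

Lemma inf_coord_near i x z : `|inf_coord i x z - p z ord0 i| <= 2 * L * mdist x x0 + L.
Proof.
have := inf_coord_le i gone x z; rewrite shift_coord1 => up.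
have := le_inf_coord (shift_coord_lb_uniform i x z) => low.
have := mdist_ge0 x x0; have := ltW L0.
by rewrite ler_norml => ? ?; apply/andP; split; nra.
Qed.

Lemma inf_coord_lipschitz i x y z :
  `|inf_coord i x z - inf_coord i y z| <= 2 * L * mdist x y.
Proof.
suff one_side a b : inf_coord i a z <= inf_coord i b z + 2 * L * mdist a b.
  have := one_side x y; have := one_side y x; rewrite (metric_sym y x).
  by rewrite ler_norml => ? ?; apply/andP; split; lra.
rewrite -lerBlDr; apply: le_inf_coord => g; rewrite lerBlDr.
apply: le_trans (inf_coord_le i g a z) _; rewrite /shift_coord.
by have := metric_triangle a b (actX g x0); have := ltW L0; nra.
Qed.

Lemma inf_coord_invariant i h x z : inf_coord i (actX h x) (actP h z) = inf_coord i x z.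
Proof.
rewrite /inf_coord /shift_coord; congr inf; apply/seteqP; split => _ [g _ <-].
  exists (gmul (ginv h) g) => //.
  by rewrite monoid.invgM monoid.invgK !(proj2 actionP, proj2 actionX) mdist_act_inv.
exists (gmul h g) => //.
rewrite monoid.invgM (proj2 actionP) -(proj2 actionP (ginv h)) monoid.mulVg.
by rewrite (proj1 actionP) (proj2 actionX) isoA.
Qed.

Lemma inf_coord_seq_min i x : exists s : seq G, forall z,
  inf_coord i x z = seq_min (fun g => shift_coord i g x z) (shift_coord i gone x z) s.
Proof.
pose rho := 3 * mdist x x0 + 1.
have /finite_seqP [s near_s] := finite_orbit_ball properX properA x0 x rho.
exists s => z; apply/eqP; rewrite eq_le; apply/andP; split.
  by apply: le_seq_min => [|g _]; exact: inf_coord_le.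
apply: le_inf_coord => g; have [gs|far] := lerP (mdist x (actX g x0)) rho.
  by apply: seq_min_le; have : [set g | mdist x (actX g x0) <= rho] g by []; rewrite near_s.
apply: le_trans (seq_min_le_default _ _ _) _; rewrite shift_coord1.
have := shift_coord_lb i g x z; have : L * rho < L * mdist x (actX g x0) by rewrite ltr_pM2l.
rewrite /rho; lra.
Qed.

Lemma continuous_shift_coord i g x : continuous (shift_coord i g x).
Proof.
have -> : shift_coord i g x =
    (fun z => p (actP (ginv g) z) ord0 i) + (fun=> 2 * L * mdist x (actX g x0)).
  by apply/funext.
move=> z; apply: continuousD; last exact: cst_continuous.
apply: (@continuous_comp _ _ _ (actP (ginv g)) (fun w => p w ord0 i) z (@contP (ginv g) z)).
apply: (@continuous_comp _ _ _ p (fun v : 'rV[R]_N => v ord0 i) _ (proj1 properp _)).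
exact: coord_continuous.
Qed.

Lemma continuous_inf_coord_slice i x : continuous (inf_coord i x).
Proof.
have [s s_min] := inf_coord_seq_min i x.
rewrite (funext s_min).
by apply: continuous_seq_min => [|g]; exact: continuous_shift_coord.
Qed.

Lemma continuous_inf_coord i : continuous (fun q : X * P => inf_coord i q.1 q.2).
Proof.
move=> [x z]; apply/cvgrPdist_lt => e e0.
have e2 : 0 < e / 2 by rewrite divr_gt0.
have e4L : 0 < e / (4 * L) by rewrite divr_gt0 // mulr_gt0.
move/cvgrPdist_lt: (@continuous_inf_coord_slice i x z) => /(_ _ e2) near_z.
exists ([set y | mdist x y < e / (4 * L)],
        [set w | `|inf_coord i x z - inf_coord i x w| < e / 2]).
  by split => //=; apply/metricType_numDomainType.nbhs_mdistP; exists (e / (4 * L)).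
move=> [y w] [/= xy zw]; have lip := inf_coord_lipschitz i x y w.
have : 2 * L * mdist x y < e / 2.
  have -> : e / 2 = 2 * L * (e / (4 * L)) by field; apply: lt0r_neq0.
  by rewrite ltr_pM2l // mulr_gt0.
move: zw lip; rewrite !ltr_norml ler_norml => /andP [? ?] /andP [? ?] ?.
by apply/andP; split; lra.
Qed.

Definition alpha_scale : R := ((N%:R + 1) * (2 * L))^-1.

Lemma alpha_scale_gt0 : 0 < alpha_scale.
Proof. by rewrite invr_gt0 mulr_gt0 // ?mulr_gt0 // ltr_wpDl. Qed.

Definition alpha (q : X * P) : 'rV[R]_N := \row_i (alpha_scale * inf_coord i q.1 q.2).

Lemma continuous_alpha : continuous alpha.
Proof.
apply: continuous_row => i q.
apply: (@continuousM _ _ (fun=> alpha_scale) (fun q => inf_coord i q.1 q.2)).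
  exact: cvg_cst.
exact: continuous_inf_coord.
Qed.

Lemma alpha_invariant g x z : alpha (actX g x, actP g z) = alpha (x, z).
Proof. by apply/rowP => i; rewrite !mxE /= inf_coord_invariant. Qed.

Lemma alpha_lipschitz z x y : enorm (alpha (x, z) - alpha (y, z)) <= mdist x y.
Proof.
have c0 := alpha_scale_gt0; have d0 := mdist_ge0 x y.
apply: le_trans (enorm_le_coord_bound (B := alpha_scale * (2 * L * mdist x y)) _ _) _.
- by apply: mulr_ge0; [exact: ltW | apply: mulr_ge0 => //; have := L0; lra].
- move=> i; rewrite !mxE -mulrBr normrM gtr0_norm //.
  by rewrite ler_pM2l // inf_coord_lipschitz.
suff -> : (N%:R + 1) * (alpha_scale * (2 * L * mdist x y)) = mdist x y by [].
by rewrite /alpha_scale; field; rewrite !lt0r_neq0 // ltr_wpDl.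
Qed.

Lemma alpha_slice_proper x : proper_map (fun z => alpha (x, z)).
Proof.
have slice_cont : continuous (fun z => alpha (x, z)).
  apply: continuous_row => i z.
  apply: (@continuousM _ _ (fun=> alpha_scale) (inf_coord i x)); first exact: cvg_cst.
  exact: continuous_inf_coord_slice.
split => // A cA; have [B AB] := compact_rV_coord_bounded cA.
pose B' := alpha_scale^-1 * B + 2 * L * mdist x x0 + L.
have cube : compact [set v : 'rV[R]_N | forall i, `[- B', B']%classic (v ord0 i)].
  by apply: (@rV_compact _ _ (fun=> `[- B', B']%classic)) => _; exact: segment_compact.
apply: (subclosed_compact _ (proj2 properp _ cube)).
  apply: preimage_closed => //; apply: compact_closed => //; exact: norm_hausdorff.
move=> z /= /AB Az i; have := Az i; rewrite mxE /= => hc.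
have c0 := alpha_scale_gt0.
have : `|inf_coord i x z| <= alpha_scale^-1 * B.
  by rewrite -(ler_pM2l c0) mulrA mulfV ?gt_eqF // mul1r -{1}(gtr0_norm c0) -normrM.
have := inf_coord_near i x z; rewrite in_itv /= !ler_norml.
by move=> /andP [? ?] /andP [? ?]; apply/andP; split; rewrite /B'; lra.
Qed.

End InfConvolution.

Theorem proposition3 (R : realType) (G : monoid.Group.type) (S : set G)
  (X : metricType R) (actX : G -> X -> X)
  (P : topologicalType) (actP : G -> P -> P)
  (N : nat) (p : P -> 'rV[R]_N) :
  finite_symmetric_generating S ->
  proper_metric_space X -> geodesic_space X ->
  is_action actX -> free_action actX -> proper_action actX ->
  cocompact_action actX -> isometric_action actX ->
  is_action actP -> (forall g, continuous (actP g)) -> proper_action actP ->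
  proper_map p ->
  (forall (z : P) (g : G), enorm (p z - p (actP g z)) <= (word_length S g)%:R) ->
  exists alpha : X * P -> 'rV[R]_N,
    [/\ continuous alpha,
        (forall g x z, alpha (actX g x, actP g z) = alpha (x, z)),
        (forall x, proper_map (fun z => alpha (x, z))) &
        (forall z x y, enorm (alpha (x, z) - alpha (y, z)) <= mdist x y)].
Proof.
move=> genS properX geoX actionX _ properA cocpt isoA actionP contP _ properp disp.
have [[x0 _]|noX] := pselect (exists x : X, True); last first.
  exists (fun=> 0); split => // [q|x|z x]; first exact: cst_continuous.
    by case: noX; exists x.
  by case: noX; exists x.
have [L L0 svarc] := svarc_milnor_bound genS properX geoX actionX properA isoA x0 cocpt.
exists (alpha actX actP p x0 L); split.
- exact: continuous_alpha.
- exact: alpha_invariant.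
- exact: alpha_slice_proper.
- exact: alpha_lipschitz.
Qed.
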